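(* For $m\in\mathbb{N}$ let \[ x_m=(-1)^{m-1}\sum_{\ell=0}^{m}(-1)^{\ell-1}S(m,\ell)(2\ell-3)!!, \] so that $(x_1,x_2,x_3,x_4,x_5,x_6,\dots)=(1,0,1,3,16,105,\dots)$. For integers $n\ge k\ge0$ let $P(n,k)=k!\,[2(n-k)-1]!!\binom{2n-k-1}{2(n-k)}$. Then for all integers $n\ge k\ge 0$, \[ B_{n,k}(x_1,x_2,\dots,x_{n-k+1})=\frac{(-1)^n}{k!}\sum_{\ell=k}^{n}(-1)^{\ell}S(n,\ell)P(\ell,k). \]
   Context: $S(n,\ell)$ are the Stirling numbers of the second kind, given by $\frac{(e^x-1)^\ell}{\ell!}=\sum_{n\ge \ell}S(n,\ell)\frac{x^n}{n!}$. The Bell polynomials of the second kind are \[ B_{n,k}(x_1,\dots,x_{n-k+1})=\sum\frac{n!}{\prod_{i}\ell_i!}\prod_{i=1}^{n-k+1}\Big(\frac{x_i}{i!}\Big)^{\ell_i}, \] where the sum is over nonnegative integers $\ell_1,\dots,\ell_{n-k+1}$ with $\sum i\ell_i=n$ and $\sum\ell_i=k$. Double factorials: $(2j-1)!!=1\cdot3\cdots(2j-1)$ for $j\ge1$, and $[-(2j+1)]!!=(-1)^j/(2j-1)!!$ for $j\ge0$, so $(-1)!!=1$ and $(-3)!!=-1$. The binomial $\binom{2n-k-1}{2(n-k)}$ equals $1$ when $n=k$. *)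

From mathcomp Require Import all_boot all_order all_algebra.
Set Implicit Arguments. Unset Strict Implicit. Unset Printing Implicit Defensive.
Import Order.TTheory GRing.Theory Num.Theory.
Local Open Scope ring_scope.

Fixpoint stirling2 (n k : nat) : nat :=
  match n, k with
  | 0, 0 => 1
  | 0, _.+1 => 0
  | _.+1, 0 => 0
  | n'.+1, k'.+1 => (k'.+1 * stirling2 n' k'.+1 + stirling2 n' k')%N
  end.

(* Double factorial on (odd) integers, as rationals:
   for z = m >= 0 : product of the odd numbers <= m  (so (2j-1)!! = 1*3*...*(2j-1));
   for z = -(n+1) : (-1)^(n/2) / (product of the odd numbers < n),
   i.e. [-(2j+1)]!! = (-1)^j / (2j-1)!!, giving (-1)!! = 1, (-3)!! = -1.
   Only odd arguments are ever used. *)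
Definition dfact (z : int) : rat :=
  match z with
  | Posz m => \prod_(i < m.+1 | odd i) (i%:R : rat)
  | Negz n => (-1) ^+ (n./2) / \prod_(i < n | odd i) (i%:R : rat)
  end.

(* The tuple (l_1,...,l_{n-k+1}) is represented by a finite
   function l with l j = l_{j+1}; each l_i <= n is implied by sum i l_i = n. *)
Definition bellB (n k : nat) (x : nat -> rat) : rat :=
  \sum_(l : {ffun 'I_(n - k + 1) -> 'I_n.+1} |
         ((\sum_(j < n - k + 1) (j.+1 * l j)%N)%N == n) &&
         ((\sum_(j < n - k + 1) (l j : nat))%N == k))
    ((n`!)%:R / \prod_(j < n - k + 1) ((l j)`!)%:R) *
    \prod_(j < n - k + 1) (x j.+1 / (j.+1`!)%:R) ^+ (l j).

Definition xseq (m : nat) : rat :=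
  (-1) ^ (m%:Z - 1) *
  \sum_(0 <= l < m.+1)
     (-1) ^ (l%:Z - 1) * (stirling2 m l)%:R * dfact ((2 * l)%:Z - 3).

Definition Pnk (n k : nat) : rat :=
  (k`!)%:R * dfact ((2 * (n - k))%:Z - 1) * ('C(2 * n - k - 1, 2 * (n - k)))%:R.

(* By the multinomial theorem, B_{n,k}(x) is n!/k! times the coefficient of
   t^n in X(t)^k, where X(t) = sum_{m >= 1} x_m t^m / m!.  The sequence x_m is
   such that X = F o W with W(t) = 1 - e^{-t} and F(u) = 1 - sqrt(1 - 2u):
   the equation W' = 1 - W gives m! [t^m] W^l = (-1)^(m+l) l! S(m,l), and
   (1 - 2u) F' = 1 - F gives l! [u^l] F^k = P(l,k) for k <= l.  Expanding
   (F o W)^k = F^k o W then yields the formula.  All series are truncated to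
   polynomials, and congruence modulo t^m is divisibility by 'X^m. *)

From mathcomp Require Import all_boot all_order all_algebra.
From mathcomp Require Import ring zify.
Import Order.TTheory GRing.Theory Num.Theory.
Local Open Scope ring_scope.

Lemma big_ord_widen0 (V : nmodType) a b (F : nat -> V) : (a <= b)%N ->
  (forall i, (a <= i < b)%N -> F i = 0) -> \sum_(i < a) F i = \sum_(i < b) F i.
Proof.
move=> le_ab F0; rewrite (big_ord_widen b) // big_mkcond.
by apply: eq_bigr => i _; case: ltnP => // le_ai; rewrite F0 // le_ai ltn_ord.
Qed.

Section Truncation.
Context {R : idomainType}.
Implicit Types p q c : {poly R}.

Lemma coef_dvdXn [m p] : 'X^m %| p -> forall i, (i < m)%N -> p`_i = 0.
Proof.
move=> /(Pdiv.IdomainMonic.dvdpP (monicXn R m))[r ->] i lt_im.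
by rewrite coefMXn lt_im.
Qed.

Lemma dvdXnP m p : reflect (forall i, (i < m)%N -> p`_i = 0) ('X^m %| p).
Proof.
apply: (iffP idP) => [/coef_dvdXn // | p_lt_m].
have take0 : take_poly m p = 0.
  by apply/polyP => i; rewrite coef_take_poly coef0; case: ltnP => // /p_lt_m.
by rewrite -(poly_take_drop m p) take0 add0r dvdp_mull.
Qed.

Lemma coef_dvdXn_sub [m p q] :
  'X^m %| p - q -> forall i, (i < m)%N -> p`_i = q`_i.
Proof.
by move=> dvd_pq i lt_im; apply/eqP; rewrite -subr_eq0 -coefB (coef_dvdXn dvd_pq).
Qed.

Lemma dvdXn_subXX [m p q] k : 'X %| p -> 'X %| q -> 'X^m %| p - q ->
  'X^(m + k) %| p ^+ k.+1 - q ^+ k.+1.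
Proof.
move=> Xp Xq dvd_pq; rewrite subrXX exprD dvdp_mul //.
apply: (big_ind (fun r => 'X^k %| r)) => [|u v|i _]; [exact: dvdp0 | exact: dvdp_add |].
by rewrite -{1}(subnK (ltnSE (ltn_ord i))) exprD dvdp_mul // dvdp_exp2r.
Qed.

Lemma coef_comp_polyX p q n : 'X %| q ->
  (p \Po q)`_n = \sum_(i < n.+1) p`_i * (q ^+ i)`_n.
Proof.
move=> Xq; have Xiq i : 'X^i %| q ^+ i by rewrite dvdp_exp2r.
pose t i := p`_i * (q ^+ i)`_n.
rewrite coef_comp_poly !(@big_ord_widen0 _ _ (maxn (size p) n.+1) t)
  ?leq_maxl ?leq_maxr // => i /andP[le_i _]; rewrite /t.
  by rewrite (coef_dvdXn (Xiq i)) ?mulr0.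
by rewrite nth_default ?mul0r.
Qed.

Lemma dvdXn_deriv_exp [m c p] : 'X^m %| c * p^`() - (1 - p) ->
  forall k, 'X^m %| c * (p ^+ k.+1)^`() - (p ^+ k - p ^+ k.+1) *+ k.+1.
Proof.
move=> ode k; rewrite deriv_exp /=.
have -> : c * (p^`() * p ^+ k *+ k.+1) - (p ^+ k - p ^+ k.+1) *+ k.+1
          = (c * p^`() - (1 - p)) * p ^+ k *+ k.+1 by rewrite exprS; ring.
by rewrite -mulr_natr !dvdp_mulr.
Qed.

Lemma dvdX_coef0 p : ('X %| p) = (p`_0 == 0).
Proof. by rewrite -[X in X %| _]subr0 -polyC0 dvdp_XsubCl rootE horner_coef0. Qed.

End Truncation.

Lemma coef_deriv_1m2X (R : nzRingType) (p : {poly R}) i :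
  ((1 - 'X *+ 2) * p^`())`_i = p`_i.+1 *+ i.+1 - p`_i *+ (i + i).
Proof.
rewrite mulrBl mul1r coefB mulrnAl coefMn coefXM !coef_deriv.
by case: i => [|i] /=; rewrite ?mul0rn ?addn0 ?mulr0n // mulr2n mulrnDr.
Qed.

Section TruncatedExp.
Context {F : numFieldType} {A : comAlgType F}.

Lemma fact_neq0 n : (n`!)%:R != 0 :> F.
Proof. by rewrite pnatr_eq0 -lt0n fact_gt0. Qed.

Lemma invfact_bin k i : (i <= k)%N ->
  (i`!)%:R^-1 * ((k - i)`!)%:R^-1 = (k`!)%:R^-1 * ('C(k, i))%:R :> F.
Proof.
move=> le_ik; rewrite -(bin_fact le_ik) !natrM.
have bin_neq0 : 'C(k, i)%:R != 0 :> F by rewrite pnatr_eq0 -lt0n bin_gt0.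
by field; rewrite !fact_neq0 bin_neq0.
Qed.

Definition exp_trunc n (c : A) : {poly A} :=
  \poly_(a < n.+1) ((a`!)%:R^-1 *: c ^+ a).

Lemma coef_prod_exp_trunc n M (y : nat -> A) k : (k <= n)%N ->
  (\prod_(j < M) exp_trunc n (y j))`_k = (k`!)%:R^-1 *: (\sum_(j < M) y j) ^+ k.
Proof.
elim: M k => [|M IH] k le_kn.
  rewrite !big_ord0 coefC expr0n.
  by case: k {le_kn} => [|k] /=; rewrite ?fact0 ?invr1 ?scale1r ?scaler0.
rewrite [\prod_(j < M.+1) _]big_ord_recr [\sum_(j < M.+1) _]big_ord_recr coefM.
rewrite /= addrC exprDn scaler_sumr; apply: eq_bigr => i _.
have le_ik : (i <= k)%N by rewrite -ltnS.
rewrite IH ?(leq_trans le_ik) // coef_poly ltnS (leq_trans (leq_subr _ _) le_kn).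
by rewrite -scalerAr -scalerAl scalerA mulrC invfact_bin // -scalerA scaler_nat mulrC.
Qed.

End TruncatedExp.

Lemma coef_prod_scaleXn (R : comNzRingType) (I : Type) (r : seq I)
    (c : I -> R) (e : I -> nat) m :
  (\prod_(i <- r) (c i *: 'X^(e i)))`_m
    = (\sum_(i <- r) e i == m)%:R * \prod_(i <- r) c i.
Proof.
under eq_bigr => i _ do rewrite -mul_polyC.
by rewrite big_split /= -rmorph_prod prodrXr coefCM coefXn eq_sym mulrC.
Qed.

Definition egf_trunc (x : nat -> rat) M : {poly rat} :=
  \sum_(j < M) (x j.+1 / (j.+1`!)%:R) *: 'X^(j.+1).

Lemma bellB_coef n k x : (k <= n)%N ->
  bellB n k x = (n`!)%:R / (k`!)%:R * (egf_trunc x (n - k + 1) ^+ k)`_n.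
Proof.
move=> le_kn; set M := (n - k + 1)%N; pose c j := x j.+1 / (j.+1`!)%:R.
(* [Z^k] of prod_j exp(y_j Z) is (sum_j y_j)^k / k!, while expanding the
   product gives the sum defining the Bell polynomial. *)
rewrite -mulrA -coefZ /egf_trunc -/M.
rewrite -(coef_prod_exp_trunc n M (fun j => c j *: 'X^(j.+1))) //.
have exp_truncE j : exp_trunc n (c j *: 'X^(j.+1))
    = \sum_(a < n.+1) (((a`!)%:R^-1 * c j ^+ a) *: 'X^(j.+1 * a)) *: 'X^a.
  by rewrite /exp_trunc poly_def; under eq_bigr do rewrite exprZn -exprM scalerA.
under eq_bigr do rewrite exp_truncE.
rewrite bigA_distr_bigA /= !coef_sum /bellB big_mkcond mulr_sumr.
apply: eq_bigr => l _.
rewrite coef_prod_scaleXn [_%:R * \prod_(i < M) _]mulr_natl coefMn.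
rewrite coef_prod_scaleXn [\prod_(i < M) (_ * _)]big_split prodfV.
by do 2 case: eqP => _ /=; rewrite ?mulr1n ?mul1r ?mulr0n ?mul0r ?mulr0 ?mulrA.
Qed.

Lemma coef_egf_trunc x M i :
  (egf_trunc x M)`_i = if (0 < i <= M)%N then x i / (i`!)%:R else 0.
Proof.
rewrite coef_sum; under eq_bigr => j _ do rewrite coefZ coefXn.
case: i => [|i] /=; first by rewrite big1 // => j _; rewrite mulr0.
case: (ltnP i M) => [lt_iM | le_Mi].
  rewrite (bigD1 (Ordinal lt_iM)) //= eqxx mulr1 big1 ?addr0 // => j.
  by rewrite -val_eqE eqSS eq_sym => /negbTE ->; rewrite mulr0.
by rewrite big1 // => j _; rewrite eqSS gtn_eqF ?mulr0 // (leq_trans _ le_Mi).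
Qed.

Ltac natr_neq0 := rewrite ?fact_neq0;
  do ?[rewrite nat1r | rewrite natr1 | rewrite -natrD | rewrite -natrM];
  rewrite ?pnatr_eq0 -?lt0n ?muln_gt0 ?expn_gt0 ?fact_gt0.

Definition exp_neg_trunc N : {poly rat} := \poly_(i < N) ((-1) ^+ i / (i`!)%:R).

Lemma one_sub_exp_neg_ode N :
  'X^(N.-1) %| 1 * (1 - exp_neg_trunc N)^`() - (1 - (1 - exp_neg_trunc N)).
Proof.
set E := exp_neg_trunc N.
have -> : 1 * (1 - E)^`() - (1 - (1 - E)) = - (E^`() + E).
  by rewrite derivB derivC; ring.
rewrite dvdpNr.
apply/dvdXnP => i lt_iN; rewrite coefD coef_deriv !coef_poly.
have lt_i1N : (i.+1 < N)%N by lia.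
rewrite lt_i1N ltnW // exprS factS natrM -mulr_natr.
by field; natr_neq0.
Qed.

Lemma X_dvd_one_sub_exp_neg N : (0 < N)%N -> 'X %| 1 - exp_neg_trunc N.
Proof. by move=> N_gt0; rewrite dvdX_coef0 coefB coef1 coef_poly N_gt0 subrr. Qed.

Lemma coef_one_sub_exp_neg_pow N m l : (m < N)%N ->
  ((1 - exp_neg_trunc N) ^+ l)`_m * (m`!)%:R
    = (-1) ^+ (m + l) * (l`!)%:R * (stirling2 m l)%:R.
Proof.
set W := 1 - exp_neg_trunc N => lt_mN.
have XW : 'X %| W by apply: X_dvd_one_sub_exp_neg; apply: leq_ltn_trans lt_mN.
elim: m l lt_mN => [|m IH] [|l] lt_mN; rewrite ?expr0 ?coef1 ?mulr0 ?mul0r //=.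
  by rewrite (coef_dvdXn (dvdp_exp2r l.+1 XW)) ?mul0r.
have lt_mN1 : (m < N.-1)%N by lia.
have := coef_dvdXn_sub (dvdXn_deriv_exp (one_sub_exp_neg_ode N) l) m lt_mN1.
rewrite mul1r coef_deriv coefMn coefB => rec.
rewrite factS natrM mulrA [_ * (m.+1)%:R]mulr_natr rec -/W.
rewrite -[(_ - _) *+ _]mulr_natr mulrAC mulrBl.
rewrite !IH ?(ltnW lt_mN) // natrD natrM factS natrM !addnS !addSn !exprS.
ring.
Qed.

(* [sqrt_coef l k] is the coefficient of u^l in (1 - sqrt(1 - 2u))^k. *)
Definition sqrt_coef (l k : nat) : rat :=
  if k is 0 then (l == 0)%:R
  else if (k <= l)%N then
    k%:R * ((2 * l - k - 1)`!)%:R / (2 ^ (l - k) * (l - k)`! * l`!)%N%:R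
  else 0.
Arguments sqrt_coef : simpl never.

Lemma sqrt_coefE k j : sqrt_coef (k.+1 + j) k.+1
  = k.+1%:R * ((k + 2 * j)`!)%:R / (2 ^ j * j`! * (k.+1 + j)`!)%N%:R.
Proof.
rewrite /sqrt_coef leq_addr addKn.
by have -> : (2 * (k.+1 + j) - k.+1 - 1 = k + 2 * j)%N by lia.
Qed.

Lemma sqrt_coef_small l k : (l < k)%N -> sqrt_coef l k = 0.
Proof. by case: k => // k lt_lk; rewrite /sqrt_coef leqNgt lt_lk. Qed.

Lemma sqrt_coefnn k : sqrt_coef k k = 1.
Proof.
case: k => // k; have := sqrt_coefE k 0; rewrite !addn0 => ->.
rewrite expn0 fact0 !mul1n factS natrM.
by field; natr_neq0.
Qed.

Lemma sqrt_coef_succl k j : sqrt_coef (k.+1 + j).+1 k.+1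
  = ((k + 2 * j).+2 * (k + 2 * j).+1)%N%:R / (2 * j.+1 * (k.+1 + j).+1)%N%:R
    * sqrt_coef (k.+1 + j) k.+1.
Proof.
rewrite -addnS !sqrt_coefE.
have -> : (k + 2 * j.+1 = (k + 2 * j).+2)%N by lia.
rewrite addnS !factS expnS !natrM.
by field; natr_neq0.
Qed.

Lemma sqrt_coef_predk k j : sqrt_coef (k.+1 + j) k
  = (k * (k.+1 + 2 * j))%N%:R / (2 * k.+1 * j.+1)%N%:R * sqrt_coef (k.+1 + j) k.+1.
Proof.
case: k => [|k]; first by rewrite mul0n mulr0n !mul0r /sqrt_coef add1n.
rewrite {1}addSnnS !sqrt_coefE.
have -> : (k + 2 * j.+1 = (k.+1 + 2 * j).+1)%N by lia.
rewrite !addSn !addnS !factS expnS !natrM.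
by field; natr_neq0.
Qed.

Lemma sqrt_coef_rec l k : (0 < k)%N -> l.+1%:R * sqrt_coef l.+1 k
  = ((l + l)%:R - k%:R) * sqrt_coef l k + k%:R * sqrt_coef l k.-1.
Proof.
case: k => // k _; rewrite succnK; case: (ltngtP l k) => [lt_lk | lt_kl | ->].
- by rewrite !sqrt_coef_small ?mulr0 ?addr0 // ltnW.
- have [j ->] : exists j, l = (k.+1 + j)%N by exists (l - k.+1)%N; lia.
  by rewrite sqrt_coef_succl sqrt_coef_predk; field; natr_neq0.
- by rewrite !sqrt_coefnn sqrt_coef_small // mulr0 add0r !mulr1.
Qed.

Definition one_sub_sqrt_trunc N : {poly rat} := \poly_(l < N) sqrt_coef l 1.

Lemma one_sub_sqrt_ode N : 'X^(N.-1) %|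
  (1 - 'X *+ 2) * (one_sub_sqrt_trunc N)^`() - (1 - one_sub_sqrt_trunc N).
Proof.
apply/dvdXnP => i lt_iN; have lt_i1N : (i.+1 < N)%N by lia.
rewrite coefB coef_deriv_1m2X coefB coef1 !coef_poly lt_i1N ltnW //.
have := sqrt_coef_rec i 1 isT; rewrite succnK => rec.
by rewrite -[_ *+ i.+1]mulr_natl -[_ *+ (i + i)]mulr_natl rec; ring.
Qed.

Lemma coef_one_sub_sqrt_pow N l k : (l < N)%N ->
  (one_sub_sqrt_trunc N ^+ k)`_l = sqrt_coef l k.
Proof.
set F := one_sub_sqrt_trunc N => lt_lN.
have XF : 'X %| F by rewrite dvdX_coef0 coef_poly (leq_ltn_trans _ lt_lN).
elim: l k lt_lN => [|l IH] [|k] lt_lN; rewrite ?expr0 ?coef1 //.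
  by rewrite (coef_dvdXn (dvdp_exp2r k.+1 XF)) ?sqrt_coef_small.
have lt_lN1 : (l < N.-1)%N by lia.
have := coef_dvdXn_sub (dvdXn_deriv_exp (one_sub_sqrt_ode N) k) l lt_lN1.
rewrite -/F coef_deriv_1m2X coefMn coefB !IH ?(ltnW lt_lN) // => /eqP.
rewrite subr_eq => /eqP ode.
apply: (mulfI (_ : l.+1%:R != 0)); first by rewrite pnatr_eq0.
by rewrite sqrt_coef_rec // succnK mulr_natl ode; ring.
Qed.

Lemma prod_odd_fact j :
  ((\prod_(i < 2 * j | odd i) i) * 2 ^ j * j`!)%N = (2 * j)`!.
Proof.
elim: j => [|j IH]; first by rewrite big_ord0.
have -> : (2 * j.+1 = (2 * j).+2)%N by lia.
rewrite big_mkcond !big_ord_recr -big_mkcond /= oddM andFb muln1.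
rewrite /= !factS expnS -IH; ring.
Qed.

Lemma dfact_odd j : dfact ((2 * j)%:Z - 1) * (2 ^ j * j`!)%N%:R = ((2 * j)`!)%:R.
Proof.
case: j => [|j]; first by rewrite /dfact /= big_ord0 divr1 mulr1.
have -> : ((2 * j.+1)%:Z - 1 = Posz (2 * j).+1)%R by lia.
rewrite /dfact (_ : (2 * j).+2 = 2 * j.+1)%N; last by lia.
by rewrite -natr_prod -natrM mulnA prod_odd_fact.
Qed.

Lemma Pnk_sqrt_coef l k : (k <= l)%N -> Pnk l k = (l`!)%:R * sqrt_coef l k.
Proof.
case: k => [|k] le_kl.
  case: l {le_kl} => [|l]; first by rewrite /Pnk /dfact /= big_ord0 divr1 !mulr1.
  by rewrite /Pnk bin_small ?mulr0 //; lia.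
have [j ->] : exists j, l = (k.+1 + j)%N by exists (l - k.+1)%N; lia.
rewrite /Pnk addKn sqrt_coefE.
have -> : (2 * (k.+1 + j) - k.+1 - 1 = k + 2 * j)%N by lia.
have dfactE : dfact ((2 * j)%:Z - 1) = ((2 * j)`!)%:R / (2 ^ j * j`!)%N%:R.
  by rewrite -dfact_odd mulfK //; natr_neq0.
have binE : 'C(k + 2 * j, 2 * j)%:R
             = ((k + 2 * j)`!)%:R / ((2 * j)`! * k`!)%N%:R :> rat.
  by rewrite -(bin_fact (leq_addl k (2 * j))) addnK natrM mulfK //; natr_neq0.
by rewrite dfactE binE factS natrM; field; natr_neq0.
Qed.

Definition egf_xseq N : {poly rat} := one_sub_sqrt_trunc N \Po (1 - exp_neg_trunc N).

Lemma coef_egf_xseq_pow N n k : (n < N)%N ->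
  (n`!)%:R * (egf_xseq N ^+ k)`_n = (-1) ^+ n *
    \sum_(l < n.+1) (-1) ^+ l * (stirling2 n l)%:R * ((l`!)%:R * sqrt_coef l k).
Proof.
move=> lt_nN; rewrite /egf_xseq -rmorphXn /= coef_comp_polyX; last first.
  exact: X_dvd_one_sub_exp_neg (leq_ltn_trans _ lt_nN).
rewrite !mulr_sumr; apply: eq_bigr => l _.
have lt_lN : (l < N)%N := leq_ltn_trans (ltnSE (ltn_ord l)) lt_nN.
rewrite coef_one_sub_sqrt_pow // mulrCA [_ * _`_n]mulrC.
by rewrite coef_one_sub_exp_neg_pow // exprD; ring.
Qed.

Lemma coef_egf_xseq N m : (0 < m < N)%N -> (m`!)%:R * (egf_xseq N)`_m = xseq m.
Proof.
case: m => // m /= lt_mN; rewrite -[egf_xseq N]expr1 coef_egf_xseq_pow //.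
rewrite /xseq big_mkord (_ : m.+1%:Z - 1 = m)%R; last by lia.
rewrite -exprnP !mulr_sumr; apply: eq_bigr => -[[|l] lt_lm] _ /=.
  by rewrite !(mulr0, mul0r).
rewrite (_ : l.+1%:Z - 1 = l)%R; last by lia.
rewrite (_ : (2 * l.+1)%:Z - 3 = (2 * l)%:Z - 1)%R; last by lia.
have -> : (l.+1`!)%:R * sqrt_coef l.+1 1 = dfact ((2 * l)%:Z - 1).
  rewrite -Pnk_sqrt_coef // /Pnk subn1 /=.
  by rewrite (_ : 2 * l.+1 - 1 - 1 = 2 * l)%N ?binn ?mul1r ?mulr1 //; lia.
by rewrite -exprnP !exprS; ring.
Qed.

Lemma X_dvd_egf_xseq N : (0 < N)%N -> 'X %| egf_xseq N.
Proof.
move=> N_gt0; have := coef_egf_xseq_pow N 0 1 N_gt0.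
rewrite expr1 fact0 mul1r big_ord1 sqrt_coef_small // !mulr0 => egf0.
by rewrite dvdX_coef0 egf0.
Qed.

Lemma egf_trunc_xseq_modXn M N : (M < N)%N ->
  'X^(M.+1) %| egf_trunc xseq M - egf_xseq N.
Proof.
move=> lt_MN; apply/dvdXnP => -[_ | i /ltnSE lt_iM]; rewrite coefB coef_egf_trunc /=.
  have /X_dvd_egf_xseq : (0 < N)%N := leq_ltn_trans (leq0n M) lt_MN.
  by rewrite dvdX_coef0 => /eqP ->; rewrite subr0.
rewrite lt_iM -(@coef_egf_xseq N i.+1) ?(leq_ltn_trans lt_iM lt_MN) //.
by rewrite [_ * _`_i.+1]mulrC mulfK ?subrr ?fact_neq0.
Qed.

Lemma coef_egf_trunc_xseq_pow n k : (k <= n)%N ->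
  (egf_trunc xseq (n - k + 1) ^+ k)`_n = (egf_xseq n.+1 ^+ k)`_n.
Proof.
case: k => [|k] le_kn; first by rewrite !expr0.
have X_egf : 'X %| egf_trunc xseq (n - k.+1 + 1) by rewrite dvdX_coef0 coef_egf_trunc.
have X_egf_xseq := X_dvd_egf_xseq n.+1 (ltn0Sn n).
have lt_Mn : (n - k.+1 + 1 < n.+1)%N by lia.
have := dvdXn_subXX k X_egf X_egf_xseq (egf_trunc_xseq_modXn _ _ lt_Mn).
rewrite (_ : ((n - k.+1 + 1).+1 + k = n.+1)%N); last by lia.
by move/coef_dvdXn_sub; apply.
Qed.

Theorem theorem3p4 (n k : nat) : (k <= n)%N ->
  bellB n k xseq =
  (-1) ^+ n / (k`!)%:R *
  \sum_(k <= l < n.+1) (-1) ^+ l * (stirling2 n l)%:R * Pnk l k.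
Proof.
move=> le_kn; rewrite bellB_coef // coef_egf_trunc_xseq_pow //.
have -> : \sum_(k <= l < n.+1) (-1) ^+ l * (stirling2 n l)%:R * Pnk l k
    = \sum_(l < n.+1) (-1) ^+ l * (stirling2 n l)%:R * ((l`!)%:R * sqrt_coef l k).
  rewrite big_geq_mkord big_mkcond; apply: eq_bigr => l _.
  by case: leqP => [le_kl | lt_lk] /=; rewrite ?Pnk_sqrt_coef // sqrt_coef_small ?mulr0.
by rewrite mulrAC coef_egf_xseq_pow // [RHS]mulrAC.
Qed.
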